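(* Let $\mathsf{Ax}\subseteq\{\mathsf{N}_\Diamond,\mathsf{C}_\Diamond,\mathsf{I}_{\Diamond\Box}\}$. Then $\mathsf{CK}\oplus\mathsf{Ax}$ is a conservative extension of $\mathsf{CK}_\Box$ if and only if $\mathsf{N}_\Diamond\notin\mathsf{Ax}$ or $\mathsf{I}_{\Diamond\Box}\notin\mathsf{Ax}$.
   Context: Formulas: $\mathbf{L}$ is generated from a countably infinite set of propositional variables by $\varphi ::= p \mid \bot \mid \varphi\wedge\varphi \mid \varphi\vee\varphi \mid \varphi\to\varphi \mid \Box\varphi \mid \Diamond\varphi$. Axioms: $\mathsf{K}_\Box$: $\Box(\varphi\to\psi)\to(\Box\varphi\to\Box\psi)$; $\mathsf{K}_\Diamond$: $\Box(\varphi\to\psi)\to(\Diamond\varphi\to\Diamond\psi)$; $\mathsf{N}_\Diamond$: $\Diamond\bot\to\bot$; $\mathsf{C}_\Diamond$: $\Diamond(\varphi\vee\psi)\to\Diamond\varphi\vee\Diamond\psi$; $\mathsf{I}_{\Diamond\Box}$: $(\Diamond\varphi\to\Box\psi)\to\Box(\varphi\to\psi)$. For a set $\mathsf{Ax}$ of axioms, $\mathsf{CK}\oplus\mathsf{Ax}$ is the relation $\Gamma\vdash_{\mathsf{Ax}}\varphi$ inductively generated by: (Ax) $\Gamma\vdash\varphi$ whenever $\varphi$ is a substitution instance of an axiom of a standard Hilbert axiomatisation of intuitionistic propositional logic, of $\mathsf{K}_\Box$, of $\mathsf{K}_\Diamond$, or of an element of $\mathsf{Ax}$; (El) $\Gamma\vdash\varphi$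 if $\varphi\in\Gamma$; (MP) from $\Gamma\vdash\varphi$ and $\Gamma\vdash\varphi\to\psi$ infer $\Gamma\vdash\psi$; (Nec) from $\emptyset\vdash\varphi$ infer $\Gamma\vdash\Box\varphi$. A formula is derivable if $\emptyset\vdash_{\mathsf{Ax}}\varphi$. $\mathsf{CK}_\Box$ is the logic on $\Diamond$-free formulas axiomatised by intuitionistic propositional logic plus $\mathsf{K}_\Box$, closed under modus ponens and necessitation. A logic is a conservative extension of $\mathsf{CK}_\Box$ if its derivable $\Diamond$-free formulas are exactly the theorems of $\mathsf{CK}_\Box$. *)

Inductive form : Type :=
| Var : nat -> form
| Bot : form
| And : form -> form -> form
| Or  : form -> form -> form
| Imp : form -> form -> form
| Box : form -> form
| Dia : form -> form.

Fixpoint dfree (f : form) : Prop :=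
  match f with
  | Var _ | Bot => True
  | And a b | Or a b | Imp a b => dfree a /\ dfree b
  | Box a => dfree a
  | Dia _ => False
  end.

Inductive ipc_axiom : form -> Prop :=
| ipc_K  : forall a b, ipc_axiom (Imp a (Imp b a))
| ipc_S  : forall a b c,
    ipc_axiom (Imp (Imp a (Imp b c)) (Imp (Imp a b) (Imp a c)))
| ipc_andE1 : forall a b, ipc_axiom (Imp (And a b) a)
| ipc_andE2 : forall a b, ipc_axiom (Imp (And a b) b)
| ipc_andI  : forall a b, ipc_axiom (Imp a (Imp b (And a b)))
| ipc_orI1  : forall a b, ipc_axiom (Imp a (Or a b))
| ipc_orI2  : forall a b, ipc_axiom (Imp b (Or a b))
| ipc_orE   : forall a b c,
    ipc_axiom (Imp (Imp a c) (Imp (Imp b c) (Imp (Or a b) c)))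
| ipc_efq   : forall a, ipc_axiom (Imp Bot a).

Definition axK_box (a b : form) : form :=
  Imp (Box (Imp a b)) (Imp (Box a) (Box b)).
Definition axK_dia (a b : form) : form :=
  Imp (Box (Imp a b)) (Imp (Dia a) (Dia b)).
Definition axN_dia : form := Imp (Dia Bot) Bot.
Definition axC_dia (a b : form) : form :=
  Imp (Dia (Or a b)) (Or (Dia a) (Dia b)).
Definition axI_diabox (a b : form) : form :=
  Imp (Imp (Dia a) (Box b)) (Box (Imp a b)).

(* A subset Ax of {N_Dia, C_Dia, I_DiaBox}, given by membership flags. *)
Record axset : Type := mkAx { hasN : bool; hasC : bool; hasI : bool }.

Inductive ck_axiom (Ax : axset) : form -> Prop :=
| ck_ipc  : forall f, ipc_axiom f -> ck_axiom Ax f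
| ck_Kbox : forall a b, ck_axiom Ax (axK_box a b)
| ck_Kdia : forall a b, ck_axiom Ax (axK_dia a b)
| ck_N    : hasN Ax = true -> ck_axiom Ax axN_dia
| ck_C    : forall a b, hasC Ax = true -> ck_axiom Ax (axC_dia a b)
| ck_I    : forall a b, hasI Ax = true -> ck_axiom Ax (axI_diabox a b).

Definition emptyctx : form -> Prop := fun _ => False.

Inductive deriv (Ax : axset) : (form -> Prop) -> form -> Prop :=
| d_ax  : forall G f, ck_axiom Ax f -> deriv Ax G f
| d_el  : forall (G : form -> Prop) f, G f -> deriv Ax G f
| d_mp  : forall G f g, deriv Ax G f -> deriv Ax G (Imp f g) -> deriv Ax G g
| d_nec : forall G f, deriv Ax emptyctx f -> deriv Ax G (Box f).

Definition derivable (Ax : axset) (f : form) : Prop := deriv Ax emptyctx f.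

Inductive ckbox_thm : form -> Prop :=
| cb_ipc  : forall f, dfree f -> ipc_axiom f -> ckbox_thm f
| cb_Kbox : forall a b, dfree a -> dfree b -> ckbox_thm (axK_box a b)
| cb_mp   : forall f g, ckbox_thm f -> ckbox_thm (Imp f g) -> ckbox_thm g
| cb_nec  : forall f, ckbox_thm f -> ckbox_thm (Box f).

Definition conservative_over_CKbox (Ax : axset) : Prop :=
  forall f, dfree f -> (derivable Ax f <-> ckbox_thm f).

(* Over CK_Box, the two diamond axioms N and I together pin down the diamond:
   K_Dia and N give Box Bot -> ~ Dia Top, and I gives ~ Dia Top -> Box Bot.
   So Box Bot is equivalent to a negation, hence ~~ Box Bot -> Box Bot is
   derivable; it fails in the three-valued Goedel algebra where Box sends every
   value below 1 to 1/2, so it is no theorem of CK_Box.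
   Conversely, if N is missing, reading every Dia-formula as Top turns each
   axiom of CK (+) Ax into a theorem of CK_Box; if I is missing, reading them as
   Bot does. This interpretation fixes Diamond-free formulas and commutes with
   the rules, so derivable Diamond-free formulas are CK_Box theorems. *)


Definition Neg (a : form) : form := Imp a Bot.
Definition Top : form := Imp Bot Bot.

Inductive three := Lo | Mid | Hi.

Definition rank (x : three) : nat := match x with Lo => 0 | Mid => 1 | Hi => 2 end.
Definition meet3 x y := if Nat.leb (rank x) (rank y) then x else y.
Definition join3 x y := if Nat.leb (rank x) (rank y) then y else x.
Definition imp3 x y := if Nat.leb (rank x) (rank y) then Hi else y.
Definition box3 x := match x with Hi => Hi | _ => Mid end.

(* Diamond-formulas get an arbitrary value; only Diamond-free ones matter. *)
Fixpoint eval3 (v : nat -> three) (f : form) : three :=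
  match f with
  | Var n => v n
  | Bot => Lo
  | And a b => meet3 (eval3 v a) (eval3 v b)
  | Or a b => join3 (eval3 v a) (eval3 v b)
  | Imp a b => imp3 (eval3 v a) (eval3 v b)
  | Box a => box3 (eval3 v a)
  | Dia _ => Lo
  end.

Lemma ckbox_thm_eval3 f : ckbox_thm f -> forall v, eval3 v f = Hi.
Proof.
  induction 1 as [f _ Hax | a b _ _ | f g _ IHf _ IHfg | f _ IHf]; intro v.
  - destruct Hax; simpl;
      repeat match goal with |- context [eval3 v ?a] => destruct (eval3 v a) end;
      reflexivity.
  - simpl; destruct (eval3 v a), (eval3 v b); reflexivity.
  - specialize (IHf v); specialize (IHfg v); simpl in IHfg; rewrite IHf in IHfg.
    destruct (eval3 v g); easy.
  - simpl; rewrite IHf; reflexivity.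
Qed.

Definition dne_box_bot : form := Imp (Neg (Neg (Box Bot))) (Box Bot).

Lemma not_ckbox_thm_dne_box_bot : ~ ckbox_thm dne_box_bot.
Proof. intro H; discriminate (ckbox_thm_eval3 _ H (fun _ => Lo)). Qed.

Lemma ckbox_imp_const a b : dfree a -> dfree b -> ckbox_thm b -> ckbox_thm (Imp a b).
Proof.
  intros Ha Hb H; apply (cb_mp b); [exact H|].
  apply cb_ipc; [simpl; tauto | constructor].
Qed.

Lemma ckbox_imp_mp a b c : dfree a -> dfree b -> dfree c ->
  ckbox_thm (Imp a (Imp b c)) -> ckbox_thm (Imp a b) -> ckbox_thm (Imp a c).
Proof.
  intros Ha Hb Hc Habc Hab; apply (cb_mp (Imp a b)); [exact Hab|].
  apply (cb_mp (Imp a (Imp b c))); [exact Habc|].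
  apply cb_ipc; [simpl; tauto | constructor].
Qed.

Lemma ckbox_imp_refl a : dfree a -> ckbox_thm (Imp a a).
Proof.
  intro Ha; apply ckbox_imp_mp with (Imp a a); simpl; try tauto;
    apply cb_ipc; simpl; try tauto; constructor.
Qed.

Lemma ckbox_imp_trans a b c : dfree a -> dfree b -> dfree c ->
  ckbox_thm (Imp a b) -> ckbox_thm (Imp b c) -> ckbox_thm (Imp a c).
Proof.
  intros Ha Hb Hc Hab Hbc; apply ckbox_imp_mp with b; auto.
  apply ckbox_imp_const; simpl; auto.
Qed.

Lemma ckbox_box_weaken a b : dfree a -> dfree b -> ckbox_thm (Imp (Box b) (Box (Imp a b))).
Proof.
  intros Ha Hb; apply (cb_mp (Box (Imp b (Imp a b)))).
  - apply cb_nec, cb_ipc; [simpl; tauto | constructor].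
  - apply cb_Kbox; simpl; tauto.
Qed.

Fixpoint collapse_dia (c f : form) : form :=
  match f with
  | Var n => Var n
  | Bot => Bot
  | And a b => And (collapse_dia c a) (collapse_dia c b)
  | Or a b => Or (collapse_dia c a) (collapse_dia c b)
  | Imp a b => Imp (collapse_dia c a) (collapse_dia c b)
  | Box a => Box (collapse_dia c a)
  | Dia _ => c
  end.

Lemma collapse_dia_dfree c f : dfree c -> dfree (collapse_dia c f).
Proof. induction f; simpl; tauto. Qed.

Lemma collapse_dia_id c f : dfree f -> collapse_dia c f = f.
Proof. induction f; simpl; intros; try tauto; f_equal; tauto. Qed.

Lemma collapse_dia_ipc_axiom c f : ipc_axiom f -> ipc_axiom (collapse_dia c f).
Proof. destruct 1; simpl; constructor. Qed.

Lemma ckbox_thm_collapse_dia Ax c G f :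
  (forall g, ck_axiom Ax g -> ckbox_thm (collapse_dia c g)) ->
  (forall g, G g -> ckbox_thm (collapse_dia c g)) ->
  deriv Ax G f -> ckbox_thm (collapse_dia c f).
Proof.
  intros Hax HG D; induction D as [G f H | G f H | G f g _ IHf _ IHfg | G f _ IHf].
  - auto.
  - auto.
  - exact (cb_mp _ _ (IHf HG) (IHfg HG)).
  - apply cb_nec, IHf; intros g [].
Qed.

Lemma derivable_of_ckbox_thm Ax f : ckbox_thm f -> derivable Ax f.
Proof.
  unfold derivable; induction 1 as [f _ Hf | a b _ _ | f g _ Df _ Dfg | f _ Df].
  - apply d_ax, ck_ipc, Hf.
  - apply d_ax, ck_Kbox.
  - exact (d_mp _ _ _ _ Df Dfg).
  - apply d_nec, Df.
Qed.

Lemma conservative_of_collapse_dia Ax c :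
  (forall f, ck_axiom Ax f -> ckbox_thm (collapse_dia c f)) ->
  conservative_over_CKbox Ax.
Proof.
  intros Hax f Hf; split.
  - intro D; rewrite <- (collapse_dia_id c f Hf).
    apply (ckbox_thm_collapse_dia Ax c emptyctx); [exact Hax | intros g [] | exact D].
  - apply derivable_of_ckbox_thm.
Qed.

Ltac solve_dfree := simpl; repeat split; try (apply collapse_dia_dfree; simpl; tauto).

Lemma ckbox_collapse_axiom_top Ax f :
  hasN Ax = false -> ck_axiom Ax f -> ckbox_thm (collapse_dia Top f).
Proof.
  intros HN Hf; destruct Hf as [f Hf | a b | a b | HN' | a b _ | a b _]; simpl.
  - apply cb_ipc; [solve_dfree | apply collapse_dia_ipc_axiom, Hf].
  - apply cb_Kbox; solve_dfree.
  - apply ckbox_imp_const; solve_dfree; apply ckbox_imp_refl; solve_dfree.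
  - congruence.
  - apply cb_ipc; [solve_dfree | constructor].
  - (* (Top -> Box b) -> Box (a -> b), through Box b *)
    apply ckbox_imp_trans with (Box (collapse_dia Top b)); solve_dfree.
    + apply ckbox_imp_mp with Top; solve_dfree.
      * apply ckbox_imp_refl; solve_dfree.
      * apply ckbox_imp_const; solve_dfree; apply cb_ipc; [solve_dfree | constructor].
    + apply ckbox_box_weaken; solve_dfree.
Qed.

Lemma ckbox_collapse_axiom_bot Ax f :
  hasI Ax = false -> ck_axiom Ax f -> ckbox_thm (collapse_dia Bot f).
Proof.
  intros HI Hf; destruct Hf as [f Hf | a b | a b | _ | a b _ | a b HI']; simpl.
  - apply cb_ipc; [solve_dfree | apply collapse_dia_ipc_axiom, Hf].
  - apply cb_Kbox; solve_dfree.
  - apply ckbox_imp_const; solve_dfree; apply ckbox_imp_refl; solve_dfree.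
  - apply cb_ipc; [solve_dfree | constructor].
  - apply cb_ipc; [solve_dfree | constructor].
  - congruence.
Qed.

Section Deduction.

Variable Ax : axset.

Definition extend (G : form -> Prop) (a : form) : form -> Prop := fun x => G x \/ x = a.

Lemma deriv_imp_const G a f : deriv Ax G f -> deriv Ax G (Imp a f).
Proof. intro D; eapply d_mp; [exact D | apply d_ax, ck_ipc, ipc_K]. Qed.

Lemma deriv_imp_mp G a b c :
  deriv Ax G (Imp a (Imp b c)) -> deriv Ax G (Imp a b) -> deriv Ax G (Imp a c).
Proof.
  intros Dabc Dab; apply (d_mp _ _ (Imp a b)); [exact Dab|].
  apply (d_mp _ _ (Imp a (Imp b c))); [exact Dabc | apply d_ax, ck_ipc, ipc_S].
Qed.

Lemma deriv_imp_refl G a : deriv Ax G (Imp a a).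
Proof.
  apply deriv_imp_mp with (Imp a a); apply d_ax, ck_ipc, ipc_K.
Qed.

Lemma deriv_deduction G a f : deriv Ax (extend G a) f -> deriv Ax G (Imp a f).
Proof.
  intro D; remember (extend G a) as G' eqn:EG.
  induction D as [G' f H | G' f H | G' f g _ IHf _ IHfg | G' f D _]; subst.
  - apply deriv_imp_const, d_ax, H.
  - destruct H as [H | ->]; [apply deriv_imp_const, d_el, H | apply deriv_imp_refl].
  - eapply deriv_imp_mp; [apply IHfg | apply IHf]; reflexivity.
  - apply deriv_imp_const, d_nec, D.
Qed.

Lemma deriv_hyp G a : deriv Ax (extend G a) a.
Proof. apply d_el; right; reflexivity. Qed.

Lemma deriv_mono G G' f : (forall x, G x -> G' x) -> deriv Ax G f -> deriv Ax G' f.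
Proof.
  intros HG D; induction D.
  - apply d_ax; assumption.
  - apply d_el; auto.
  - eapply d_mp; auto.
  - apply d_nec; assumption.
Qed.

Lemma deriv_weaken G a f : deriv Ax G f -> deriv Ax (extend G a) f.
Proof. apply deriv_mono; intros x Hx; left; exact Hx. Qed.

Lemma deriv_efq G a : deriv Ax G Bot -> deriv Ax G a.
Proof. intro D; eapply d_mp; [exact D | apply d_ax, ck_ipc, ipc_efq]. Qed.

Lemma deriv_top G : deriv Ax G Top.
Proof. apply d_ax, ck_ipc, ipc_efq. Qed.

End Deduction.

Lemma deriv_box_bot_neg_dia_top Ax G :
  hasN Ax = true -> deriv Ax G (Imp (Box Bot) (Neg (Dia Top))).
Proof.
  intro HN; apply deriv_deduction, deriv_deduction.
  assert (Hbox : deriv Ax (extend (extend G (Box Bot)) (Dia Top)) (Box (Imp Top Bot))).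
  { eapply d_mp; [apply deriv_weaken, deriv_hyp|].
    eapply d_mp; [apply d_nec, d_ax, ck_ipc, (ipc_K Bot Top) | apply d_ax, ck_Kbox]. }
  eapply d_mp; [| apply d_ax, ck_N, HN].
  eapply d_mp; [apply deriv_hyp|].
  eapply d_mp; [exact Hbox | apply d_ax, ck_Kdia].
Qed.

Lemma deriv_neg_dia_top_box_bot Ax G :
  hasI Ax = true -> deriv Ax G (Imp (Neg (Dia Top)) (Box Bot)).
Proof.
  intro HI; apply deriv_deduction.
  assert (Hbox : deriv Ax (extend G (Neg (Dia Top))) (Box (Imp Top Bot))).
  { eapply d_mp; [| apply d_ax, ck_I, HI].
    apply deriv_deduction, deriv_efq.
    eapply d_mp; [apply deriv_hyp | apply deriv_weaken, deriv_hyp]. }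
  eapply d_mp; [exact Hbox|].
  eapply d_mp; [| apply d_ax, ck_Kbox].
  apply d_nec, deriv_deduction.
  eapply d_mp; [apply deriv_top | apply deriv_hyp].
Qed.

Lemma derivable_dne_box_bot Ax :
  hasN Ax = true -> hasI Ax = true -> derivable Ax dne_box_bot.
Proof.
  intros HN HI; apply deriv_deduction.
  eapply d_mp; [| apply deriv_neg_dia_top_box_bot, HI].
  apply deriv_deduction.
  eapply d_mp; [| apply deriv_weaken, deriv_hyp].
  apply deriv_deduction.
  eapply d_mp; [apply deriv_weaken, deriv_hyp|].
  eapply d_mp; [apply deriv_hyp | apply deriv_box_bot_neg_dia_top, HN].
Qed.

Theorem mainTheorem13 (Ax : axset) :
  conservative_over_CKbox Ax <-> (hasN Ax = false \/ hasI Ax = false).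
Proof.
  split.
  - intro Hcons.
    destruct (hasN Ax) eqn:HN; [| left; reflexivity].
    destruct (hasI Ax) eqn:HI; [| right; reflexivity].
    exfalso; apply not_ckbox_thm_dne_box_bot.
    apply (Hcons dne_box_bot); [simpl; tauto | apply derivable_dne_box_bot; assumption].
  - intros [HN | HI].
    + apply conservative_of_collapse_dia with Top; intro f.
      apply ckbox_collapse_axiom_top, HN.
    + apply conservative_of_collapse_dia with Bot; intro f.
      apply ckbox_collapse_axiom_bot, HI.
Qed.
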